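(* Let $N\ge2$, $J=1$, let $h_0,h_1\in\mathbb{R}^N$ satisfy $\|h_0\|=\|h_1\|=1$ and $h_0^{\sf T}h_1=\sin\tau$ with $\tau\in(-\pi/2,\pi/2)$, let $\sigma_0^2,\sigma_1^2,\sigma_n^2>0$ and $c_1\in[-\sigma_0\sigma_1,\sigma_0\sigma_1]$. Then for all $\lambda\ge0$, \[ \mathrm{MSE}(\lambda)=\frac{\delta^2(\sigma_1^2\cos^2\tau+\sigma_n^2)}{g(\lambda)^2}-\frac{2\sigma_n^2\delta\tan\tau}{g(\lambda)}+\sigma_n^2(\tan^2\tau+1), \] where $\delta:=\sigma_n^2\tan\tau-c_1\cos\tau$ and $g(\lambda):=\lambda\cos^2\tau+\sigma_1^2\cos^2\tau+\sigma_n^2>0$. Moreover: 1. If $\delta=0$, then $\mathrm{MSE}(\lambda)=\sigma_n^2(\tan^2\tau+1)$ for all $\lambda\ge0$. 2. If $\delta\ne0$ and $\gamma:=\sigma_n^2\tan\tau/\delta\le0$, then $\mathrm{MSE}(\lambda)$ is decreasing on $[0,\infty)$ and $\inf_{\lambda\ge0}\mathrm{MSE}(\lambda)=\lim_{\lambda\to\infty}\mathrm{MSE}(\lambda)=J_{\rm MSE}(w_{\rm ZF})$, i.e., the ZF beamformer is MSE-optimal among the RZF family. 3. If $\delta\neq0$ and $\gamma>0$, then $\mathrm{MSE}$ is minimized over $[0,\infty)$ by $\lambda=-\dfrac{c_1(\sigma_1^2\cos^2\tau+\sigma_n^2)}{\sigma_n^2\sin\tau}$ (which is $>0$) if $\gamma\in(0,1)$,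 and by $\lambda=0$ if $\gamma\ge1$.
   Context: Real-valued single-interference model: $y(k)=s_0(k)h_0+s_1(k)h_1+n(k)\in\mathbb{R}^N$, with real zero-mean jointly weakly stationary signals $s_0,s_1$, $\sigma_j^2:=E[s_j(k)^2]$, $c_1:=E[s_0(k)s_1(k)]$, and real zero-mean noise $n(k)\sim\mathcal{N}(0,\sigma_n^2I)$ uncorrelated with the signals. $R:=E[y(k)y(k)^{\sf T}]$. For $\lambda\ge0$, $R_\lambda:=R+\lambda h_1h_1^{\sf T}$ and the RZF beamformer is $w_{\rm RZF}(\lambda):=R_\lambda^{-1}h_0/(h_0^{\sf T}R_\lambda^{-1}h_0)$. The ZF beamformer is $w_{\rm ZF}:=R^{-1}H(H^{\sf T}R^{-1}H)^{-1}e_1$ with $H:=[h_0\ h_1]$ and $e_1:=[1,0]^{\sf T}$. The MSE of a beamformer $w$ is $J_{\rm MSE}(w):=E[(w^{\sf T}y(k)-s_0(k))^2]$, and $\mathrm{MSE}(\lambda):=J_{\rm MSE}(w_{\rm RZF}(\lambda))$. *)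

From HB Require Import structures.
From mathcomp Require Import all_boot all_order all_algebra.
From mathcomp Require Import all_classical all_reals all_analysis.
Set Implicit Arguments. Unset Strict Implicit. Unset Printing Implicit Defensive.
Import Order.TTheory GRing.Theory Num.Theory.
Import numFieldNormedType.Exports.
Local Open Scope ring_scope.

(* Second-order statistics of the model y = s0 h0 + s1 h1 + n.
   Parameters: sig0, sig1, sign are the standard deviations (so that
   sigma_j^2 = sig_j^2, sigma_n^2 = sign^2), c1 = E[s0 s1]. *)

Definition dot (R : realType) (N : nat) (u v : 'cV[R]_N) : R := (u^T *m v) 0 0.

(* R := E[y y^T] *)
Definition covR (R : realType) (N : nat) (h0 h1 : 'cV[R]_N)
  (sig0 sig1 c1 sign : R) : 'M[R]_N :=
  (sig0 ^+ 2) *: (h0 *m h0^T) + (sig1 ^+ 2) *: (h1 *m h1^T)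
  + c1 *: (h0 *m h1^T + h1 *m h0^T) + (sign ^+ 2)%:M.

(* E[y s0] *)
Definition xcorr (R : realType) (N : nat) (h0 h1 : 'cV[R]_N)
  (sig0 c1 : R) : 'cV[R]_N := (sig0 ^+ 2) *: h0 + c1 *: h1.

(* J_MSE(w) = E[(w^T y - s0)^2] = w^T R w - 2 w^T E[y s0] + E[s0^2] *)
Definition Jmse (R : realType) (N : nat) (h0 h1 : 'cV[R]_N)
  (sig0 sig1 c1 sign : R) (w : 'cV[R]_N) : R :=
  (w^T *m covR h0 h1 sig0 sig1 c1 sign *m w) 0 0
  - 2 * (w^T *m xcorr h0 h1 sig0 c1) 0 0 + sig0 ^+ 2.

Definition wRZF (R : realType) (N : nat) (h0 h1 : 'cV[R]_N)
  (sig0 sig1 c1 sign : R) (lam : R) : 'cV[R]_N :=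
  let Rl := covR h0 h1 sig0 sig1 c1 sign + lam *: (h1 *m h1^T) in
  ((h0^T *m invmx Rl *m h0) 0 0)^-1 *: (invmx Rl *m h0).

Definition wZF (R : realType) (N : nat) (h0 h1 : 'cV[R]_N)
  (sig0 sig1 c1 sign : R) : 'cV[R]_N :=
  let Ri := invmx (covR h0 h1 sig0 sig1 c1 sign) in
  let H : 'M[R]_(N, 1 + 1) := row_mx h0 h1 in
  Ri *m H *m invmx (H^T *m Ri *m H) *m (delta_mx 0 0 : 'cV[R]_(1 + 1)).

Definition MSE (R : realType) (N : nat) (h0 h1 : 'cV[R]_N)
  (sig0 sig1 c1 sign : R) (lam : R) : R :=
  Jmse h0 h1 sig0 sig1 c1 sign (wRZF h0 h1 sig0 sig1 c1 sign lam).

(* Everything happens in the plane spanned by [h0] and [h1], on whose orthogonal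
   complement [R_lam] acts as [sn^2]. Hence [R_lam^-1 h0] is proportional to the
   vector [w] of that plane with [h0^T w = 1] and [R_lam w] parallel to [h0];
   solving this 2x2 system gives [h1^T w = (sn^2 sin tau - c1 cos^2 tau) / g lam],
   and a distortionless [w] has MSE [s1^2 (h1^T w)^2 + sn^2 |w|^2]. This yields
   [MSE lam = delta^2 q (1 / g lam) + sn^2 (tan^2 tau + 1)] for the parabola
   [q u = D u^2 - 2 gamma u], [D = g 0]. As [lam] runs over [0, +oo), [1 / g lam]
   decreases from [1 / D] to [0], so the three cases are the positions of the
   vertex [gamma / D] of [q] relative to [(0, 1 / D]]: left of it ([gamma <= 0]),
   inside ([0 < gamma < 1]) or right of it ([1 <= gamma]). The ZF beamformer has
   MSE [sn^2 / cos^2 tau], which is the limit at [lam = +oo]. *)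

From HB Require Import structures.
From mathcomp Require Import all_boot all_order all_algebra.
From mathcomp Require Import all_classical all_reals all_analysis.
From mathcomp Require Import ring lra.
Set Implicit Arguments. Unset Strict Implicit. Unset Printing Implicit Defensive.
Import Order.TTheory GRing.Theory Num.Theory.
Import numFieldNormedType.Exports.
Local Open Scope classical_set_scope.
Local Open Scope ring_scope.

Section Dot.
Variables (R : realType) (N : nat).
Implicit Types u v w : 'cV[R]_N.

Lemma trmx_mul_dot u v : u^T *m v = (dot u v)%:M.
Proof. by rewrite /dot -mx11_scalar. Qed.

Lemma dotC u v : dot u v = dot v u.
Proof. by rewrite /dot !mxE; apply: eq_bigr => i _; rewrite !mxE mulrC. Qed.

Lemma dotDr u v w : dot u (v + w) = dot u v + dot u w.
Proof. by rewrite /dot mulmxDr mxE. Qed.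

Lemma dotZr u v a : dot u (a *: v) = a * dot u v.
Proof. by rewrite /dot -scalemxAr mxE. Qed.

Lemma dotDl u v w : dot (v + w) u = dot v u + dot w u.
Proof. by rewrite dotC dotDr !(dotC u). Qed.

Lemma dotZl u v a : dot (a *: v) u = a * dot v u.
Proof. by rewrite dotC dotZr dotC. Qed.

Lemma dot0r u : dot u 0 = 0.
Proof. by rewrite /dot mulmx0 mxE. Qed.

Lemma mul_outer_mx u v w : u *m v^T *m w = dot v w *: u.
Proof. by rewrite -mulmxA trmx_mul_dot mul_mx_scalar. Qed.

Lemma dotrr_ge0 u : 0 <= dot u u.
Proof. by rewrite /dot mxE; apply: sumr_ge0 => i _; rewrite !mxE -expr2 sqr_ge0. Qed.

Lemma dotrr_eq0 u : (dot u u == 0) = (u == 0).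
Proof.
apply/idP/eqP => [|->]; last by rewrite dot0r.
rewrite /dot mxE psumr_eq0 => [/allP u0|i _]; last by rewrite !mxE -expr2 sqr_ge0.
apply/matrixP => i j; rewrite (ord1 j) !mxE.
by have := u0 i (mem_index_enum _); rewrite !mxE /= -expr2 sqrf_eq0 => /eqP.
Qed.

End Dot.

Lemma ker0_unitmx (R : fieldType) (n : nat) (A : 'M[R]_n) :
  (forall x : 'cV[R]_n, A *m x = 0 -> x = 0) -> A \in unitmx.
Proof.
move=> Ainj; rewrite -unitmx_tr unitmxE unitfE; apply/negP => /det0P [v v0 vA].
move: v0; rewrite -trmx_eq0 (Ainj v^T) ?eqxx //.
by rewrite -[A]trmxK -trmx_mul vA trmx0.
Qed.

Lemma corr_form_ge0 (R : realFieldType) (s0 s1 c1 p q : R) : 0 < s0 -> 0 < s1 ->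
  - (s0 * s1) <= c1 <= s0 * s1 ->
  0 <= s0 ^+ 2 * p ^+ 2 + 2 * c1 * p * q + s1 ^+ 2 * q ^+ 2.
Proof.
move=> s0_gt0 s1_gt0 /andP [c1_ge c1_le].
(* the form times [2 s0 s1] is a nonnegative combination of two squares *)
have E : (s0 * s1 + c1) * (s0 * p + s1 * q) ^+ 2 + (s0 * s1 - c1) * (s0 * p - s1 * q) ^+ 2
   = 2 * (s0 * s1) * (s0 ^+ 2 * p ^+ 2 + 2 * c1 * p * q + s1 ^+ 2 * q ^+ 2) by ring.
have s01_gt0 : 0 < 2 * (s0 * s1) by rewrite !mulr_gt0.
rewrite -(pmulr_rge0 _ s01_gt0) -E.
by apply: addr_ge0; apply: mulr_ge0; rewrite ?sqr_ge0 //; lra.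
Qed.

Section Quadratic.
Variables (R : realFieldType) (D gm : R).
Hypothesis D_gt0 : 0 < D.

Definition quad (u : R) := D * u ^+ 2 - 2 * gm * u.

Lemma quad_vertex_min u : quad (gm / D) <= quad u.
Proof.
have E : quad u - quad (gm / D) = D * (u - gm / D) ^+ 2.
  by rewrite /quad; field; rewrite gt_eqF.
by rewrite -subr_ge0 E mulr_ge0 ?sqr_ge0 ?ltW.
Qed.

Lemma quad_ltr_right u v : gm / D <= u -> u < v -> quad u < quad v.
Proof.
move=> vertex_le_u uv; have E : quad v - quad u = (v - u) * (D * (u + v) - 2 * gm).
  by rewrite /quad; ring.
rewrite -subr_gt0 E mulr_gt0 ?subr_gt0 //.
move: vertex_le_u uv; rewrite ler_pdivrMr // => vertex_le_u uv.
have : D * u < D * v by rewrite ltr_pM2l.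
lra.
Qed.

Lemma quad_ler_left u v : u <= v -> v <= gm / D -> quad v <= quad u.
Proof.
move=> uv v_le_vertex; have E : quad u - quad v = (v - u) * (2 * gm - D * (u + v)).
  by rewrite /quad; ring.
rewrite -subr_ge0 E mulr_ge0 ?subr_ge0 //.
move: v_le_vertex; rewrite ler_pdivlMr // => v_le_vertex.
have : D * u <= D * v by rewrite ler_pM2l.
lra.
Qed.

End Quadratic.

Section SignalModel.
Variables (R : realType) (N : nat) (h0 h1 : 'cV[R]_N) (s0 s1 c1 sn : R).

Definition covRl (lam : R) := covR h0 h1 s0 s1 c1 sn + lam *: (h1 *m h1^T).

Lemma covRl_mul lam x : covRl lam *m x =
  (s0 ^+ 2 * dot h0 x + c1 * dot h1 x) *: h0
  + ((s1 ^+ 2 + lam) * dot h1 x + c1 * dot h0 x) *: h1 + sn ^+ 2 *: x.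
Proof.
rewrite /covRl /covR !mulmxDl -!scalemxAl !mulmxDl !mul_outer_mx mul_scalar_mx.
by apply/matrixP => i j; rewrite !mxE; ring.
Qed.

Lemma covRl0 : covRl 0 = covR h0 h1 s0 s1 c1 sn.
Proof. by rewrite /covRl scale0r addr0. Qed.

Lemma Jmse_distortionless w : dot h0 w = 1 ->
  Jmse h0 h1 s0 s1 c1 sn w = s1 ^+ 2 * dot h1 w ^+ 2 + sn ^+ 2 * dot w w.
Proof.
move=> h0w; rewrite /Jmse -mulmxA -/(dot w _) -covRl0 covRl_mul -/(dot w _) /xcorr.
by rewrite !dotDr !dotZr !(dotC w h0) !(dotC w h1) h0w; ring.
Qed.

Hypotheses (s0_gt0 : 0 < s0) (s1_gt0 : 0 < s1) (sn_gt0 : 0 < sn).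
Hypothesis c1_bound : - (s0 * s1) <= c1 <= s0 * s1.

Lemma covRl_ge lam x : 0 <= lam ->
  sn ^+ 2 * dot x x <= dot x (covRl lam *m x).
Proof.
move=> lam_ge0; rewrite covRl_mul !dotDr !dotZr !(dotC x h0) !(dotC x h1).
have := corr_form_ge0 (dot h0 x) (dot h1 x) s0_gt0 s1_gt0 c1_bound.
have : 0 <= lam * dot h1 x ^+ 2 by rewrite mulr_ge0 ?sqr_ge0.
lra.
Qed.

Lemma covRl_definite lam x : 0 <= lam -> dot x (covRl lam *m x) <= 0 -> x = 0.
Proof.
move=> lam_ge0 xRx_le0; apply/eqP; rewrite -dotrr_eq0 eq_le dotrr_ge0 andbT.
have := covRl_ge x lam_ge0; have := exprn_gt0 2 sn_gt0; have := dotrr_ge0 x; nra.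
Qed.

Lemma covRl_unit lam : 0 <= lam -> covRl lam \in unitmx.
Proof.
move=> lam_ge0; apply: ker0_unitmx => x Rx0.
by apply: (covRl_definite lam_ge0); rewrite Rx0 dot0r.
Qed.

Lemma covR_unit : covR h0 h1 s0 s1 c1 sn \in unitmx.
Proof. by rewrite -covRl0 covRl_unit. Qed.

Variables a c : R.
Hypotheses (h00 : dot h0 h0 = 1) (h11 : dot h1 h1 = 1) (h01 : dot h0 h1 = a).
Hypotheses (c_gt0 : 0 < c) (ac1 : a ^+ 2 + c ^+ 2 = 1).

(* [a], [c] play the roles of [sin tau], [cos tau]. *)
Local Notation t := (a / c).
Local Notation delta := (sn ^+ 2 * t - c1 * c).
Local Notation D := (s1 ^+ 2 * c ^+ 2 + sn ^+ 2).

Let c_neq0 : c != 0 := lt0r_neq0 c_gt0.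

Lemma dot_h0_span p q : dot h0 (p *: h0 + q *: h1) = p + q * a.
Proof. by rewrite dotDr !dotZr h00 h01 mulr1. Qed.

Lemma dot_h1_span p q : dot h1 (p *: h0 + q *: h1) = p * a + q.
Proof. by rewrite dotDr !dotZr h11 dotC h01 mulr1. Qed.

(* Gram system [[1, a], [a, 1]] (p, q) = (r, 0), of determinant c^2. *)
Lemma gram_solve p q r : p + q * a = r -> p * a + q = 0 -> p * c ^+ 2 = r.
Proof.
move=> e0 e1; have -> : c ^+ 2 = 1 - a ^+ 2 by rewrite -ac1; ring.
by rewrite -e0 -[q]subr0 -e1; ring.
Qed.

Lemma span_eq0 p q : p *: h0 + q *: h1 = 0 -> p = 0 /\ q = 0.
Proof.
move=> pq0; have e0 := dot_h0_span p q; have e1 := dot_h1_span p q.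
rewrite pq0 !dot0r in e0 e1.
have /eqP := gram_solve (esym e0) (esym e1).
rewrite mulf_eq0 expf_eq0 /= (negPf c_neq0) orbF => /eqP p0.
by split => //; move: e1; rewrite p0 mul0r add0r.
Qed.

Lemma wRZF_char lam w k : 0 <= lam -> covRl lam *m w = k *: h0 -> dot h0 w = 1 ->
  wRZF h0 h1 s0 s1 c1 sn lam = w.
Proof.
move=> lam_ge0 Rw h0w; have Ru := covRl_unit lam_ge0.
have k_neq0 : k != 0.
  apply/eqP => k0; move: h0w.
  by rewrite -(mulKmx Ru w) Rw k0 scale0r !mulmx0 dot0r => /esym/eqP; rewrite oner_eq0.
have Rh0 : invmx (covRl lam) *m h0 = k^-1 *: w.
  by rewrite -[w](mulKmx Ru) Rw -scalemxAr scalerA mulVf // scale1r.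
rewrite /wRZF -/(covRl lam) -mulmxA Rh0 -scalemxAr mxE -/(dot h0 w) h0w mulr1.
by rewrite scalerA mulVf ?invr_eq0 // scale1r.
Qed.

Definition distortionless (b : R) :=
  (1 - a * ((b - a) / c ^+ 2)) *: h0 + ((b - a) / c ^+ 2) *: h1.

Lemma dot_h0_distortionless b : dot h0 (distortionless b) = 1.
Proof. by rewrite dot_h0_span; ring. Qed.

Lemma dot_h1_distortionless b : dot h1 (distortionless b) = b.
Proof.
rewrite dot_h1_span.
have -> : (1 - a * ((b - a) / c ^+ 2)) * a + (b - a) / c ^+ 2
          = a + (b - a) / c ^+ 2 * (1 - a ^+ 2) by ring.
have -> : 1 - a ^+ 2 = c ^+ 2 by rewrite -ac1; ring.
by field; rewrite c_neq0.
Qed.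

Lemma dot_distortionless b :
  dot (distortionless b) (distortionless b) = 1 + (b - a) ^+ 2 / c ^+ 2.
Proof.
rewrite {1}/distortionless dotDl !dotZl dot_h0_distortionless dot_h1_distortionless.
by field; rewrite c_neq0.
Qed.

Definition rzf_den (lam : R) := lam * c ^+ 2 + s1 ^+ 2 * c ^+ 2 + sn ^+ 2.

Lemma rzf_den_gt0 lam : 0 <= lam -> 0 < rzf_den lam.
Proof.
move=> lam_ge0; have := mulr_ge0 lam_ge0 (sqr_ge0 c).
have := mulr_ge0 (sqr_ge0 s1) (sqr_ge0 c); have := exprn_gt0 2 sn_gt0.
rewrite /rzf_den; lra.
Qed.

Lemma wRZFE lam : 0 <= lam -> wRZF h0 h1 s0 s1 c1 sn lam =
  distortionless ((sn ^+ 2 * a - c1 * c ^+ 2) / rzf_den lam).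
Proof.
move=> lam_ge0; set b := _ / _; set w := distortionless b.
apply: (wRZF_char (k := s0 ^+ 2 + c1 * b + sn ^+ 2 * (1 - a * ((b - a) / c ^+ 2))));
  rewrite ?dot_h0_distortionless //.
rewrite covRl_mul dot_h0_distortionless dot_h1_distortionless /w /distortionless.
rewrite scalerDr !scalerA addrACA -!scalerDl.
(* the choice of [b] cancels the [h1] component of [covRl lam *m w] *)
have -> : (s1 ^+ 2 + lam) * b + c1 * 1 + sn ^+ 2 * ((b - a) / c ^+ 2) = 0.
  have := rzf_den_gt0 lam_ge0; rewrite /b /rzf_den -exprMn => den_gt0.
  by field; rewrite c_neq0 gt_eqF.
by rewrite scale0r addr0 mulr1.
Qed.

Lemma MSE_RZF lam : 0 <= lam ->
  MSE h0 h1 s0 s1 c1 sn lam = delta ^+ 2 * D / rzf_den lam ^+ 2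
    - 2 * sn ^+ 2 * delta * t / rzf_den lam + sn ^+ 2 * (t ^+ 2 + 1).
Proof.
move=> lam_ge0; rewrite /MSE wRZFE // Jmse_distortionless ?dot_h0_distortionless //.
rewrite dot_h1_distortionless dot_distortionless.
have := rzf_den_gt0 lam_ge0; rewrite /rzf_den -exprMn => den_gt0.
by field; rewrite c_neq0 gt_eqF.
Qed.

(* the numerator of [delta], in the form produced by [field] *)
Lemma delta_mulcE : delta * c = sn ^+ 2 * a + - (c1 * c) * c.
Proof. by field. Qed.

Lemma MSE_RZF_quad lam : 0 <= lam -> delta != 0 ->
  MSE h0 h1 s0 s1 c1 sn lam =
    delta ^+ 2 * quad D (sn ^+ 2 * t / delta) (lam * c ^+ 2 + D)^-1 + sn ^+ 2 * (t ^+ 2 + 1).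
Proof.
move=> lam_ge0 delta_neq0; have := rzf_den_gt0 lam_ge0.
rewrite MSE_RZF // /quad /rzf_den -addrA -exprMn => den_gt0.
have := mulf_neq0 delta_neq0 c_neq0; rewrite delta_mulcE => num_neq0.
by field; rewrite num_neq0 c_neq0 gt_eqF.
Qed.

Lemma rzf_vertexE : a != 0 -> delta != 0 ->
  (D / (sn ^+ 2 * t / delta) - D) / c ^+ 2 = - (c1 * D) / (sn ^+ 2 * a).
Proof.
move=> a_neq0 delta_neq0.
have := mulf_neq0 delta_neq0 c_neq0; rewrite delta_mulcE => num_neq0.
by field; rewrite num_neq0 a_neq0 c_neq0 gt_eqF.
Qed.

Lemma mul_row_mx2 (x : 'cV[R]_(1 + 1)) :
  row_mx h0 h1 *m x = usubmx x 0 0 *: h0 + dsubmx x 0 0 *: h1.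
Proof.
rewrite -{1}[x]vsubmxK mul_row_col {1}(mx11_scalar (usubmx x)) {1}(mx11_scalar (dsubmx x)).
by rewrite !mul_mx_scalar.
Qed.

Lemma tr_row_mx2_mul z : (row_mx h0 h1)^T *m z = col_mx (dot h0 z)%:M (dot h1 z)%:M.
Proof. by rewrite tr_row_mx mul_col_mx !trmx_mul_dot. Qed.

Lemma ZF_gram_unit :
  (row_mx h0 h1)^T *m invmx (covR h0 h1 s0 s1 c1 sn) *m row_mx h0 h1 \in unitmx.
Proof.
set H := row_mx h0 h1.
apply: ker0_unitmx => x Gx; set u := invmx (covR h0 h1 s0 s1 c1 sn) *m (H *m x).
have HTu : H^T *m u = 0 by rewrite /u !mulmxA.
have Ru_eq : covR h0 h1 s0 s1 c1 sn *m u = H *m x by rewrite /u mulKVmx ?covR_unit.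
have u0 : u = 0.
  apply: (covRl_definite (lexx 0)); rewrite covRl0 Ru_eq /dot mulmxA.
  by rewrite -[u^T *m H]trmxK trmx_mul trmxK HTu trmx0 !mul0mx mxE.
move: Ru_eq; rewrite u0 mulmx0 mul_row_mx2 => /esym/span_eq0[x0 x1].
rewrite -[x]vsubmxK (mx11_scalar (usubmx x)) (mx11_scalar (dsubmx x)) x0 x1.
by apply/matrixP => i j; rewrite !mxE; case: splitP => ? _; rewrite !mxE mul0rn.
Qed.

Lemma wZF_constraints : let z := wZF h0 h1 s0 s1 c1 sn in
  [/\ dot h0 z = 1, dot h1 z = 0 &
      exists p q, covR h0 h1 s0 s1 c1 sn *m z = p *: h0 + q *: h1].
Proof.
rewrite /wZF; set R0 := covR _ _ _ _ _ _; set H := row_mx h0 h1.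
set P := H^T *m invmx R0 *m H; set e := delta_mx 0 0; set z := _ *m e.
have HTz : H^T *m z = e by rewrite /z !mulmxA -/P mulmxV ?mul1mx ?ZF_gram_unit.
rewrite tr_row_mx2_mul in HTz.
split.
- by have := congr1 (fun M => usubmx M 0 0) HTz; rewrite /= col_mxKu !mxE mulr1n.
- by have := congr1 (fun M => dsubmx M 0 0) HTz; rewrite /= col_mxKd !mxE.
- exists (usubmx (invmx P *m e) 0 0), (dsubmx (invmx P *m e) 0 0).
  by rewrite -mul_row_mx2 /z -!mulmxA mulKVmx ?covR_unit.
Qed.

Lemma Jmse_ZF : Jmse h0 h1 s0 s1 c1 sn (wZF h0 h1 s0 s1 c1 sn) = sn ^+ 2 / c ^+ 2.
Proof.
have [z0 z1 [p [q Rz]]] := wZF_constraints; set z := wZF _ _ _ _ _ _ in z0 z1 Rz *.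
rewrite Jmse_distortionless // z1.
rewrite -covRl0 covRl_mul z0 z1 in Rz.
(* [Rz] puts [sn^2 z] in the span of [h0], [h1]; test it against [h0], [h1] and [z] *)
have e0 := congr1 (dot h0) Rz; have e1 := congr1 (dot h1) Rz.
have ez := congr1 (dot z) Rz.
rewrite !dotDr !dotZr h00 h11 (dotC h1 h0) h01 !(dotC z) z0 z1 in e0 e1 ez.
rewrite !(mulr1, mulr0, addr0, add0r, expr0n) /= in e0 e1 ez *; subst p.
have : sn ^+ 2 * dot z z * c ^+ 2 = sn ^+ 2.
  apply: (gram_solve (q := q - c1)).
    by apply: (addrI (s0 ^+ 2 + c1 * a)); rewrite e0; ring.
  by rewrite -(subrr (s0 ^+ 2 * a + c1)) {1}e1; ring.
by move=> gram; rewrite -[in RHS]gram; field; rewrite c_neq0.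
Qed.

End SignalModel.

Lemma inf_image_cvgy (R : realType) (f : R -> R) (l : R) :
  (forall x, 0 <= x -> l <= f x) -> f x @[x --> +oo] --> l ->
  inf [set f x | x in [set x | 0 <= x]] = l.
Proof.
move=> f_ge fl; pose S := [set f x | x in [set x : R | 0 <= x]].
have lbS : lbound S l by move=> _ [x x_ge0 <-]; exact: f_ge.
apply/eqP; rewrite eq_le (lb_le_inf _ lbS) ?andbT; last by exists (f 0); rewrite /S /=; exists 0.
apply/ler_addgt0Pr => e e_gt0.
move/cvgrPdist_lt : fl => /(_ e e_gt0) [M [_ near_l]].
set x := Num.max 0 M + 1.
have x_ge0 : 0 <= x by rewrite addr_ge0 // le_max lexx.
have Mx : M < x.
  have : M <= Num.max 0 M by rewrite le_max lexx orbT.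
  rewrite /x; lra.
have := near_l x Mx; rewrite ltr_distlC => /andP[_ fx_lt].
by apply: le_trans (ltW fx_lt); apply: ge_inf; [exists l | exists x].
Qed.

Section RegularizationProfile.
Variables (R : realType) (a D dl gm L : R) (f : R -> R).
Hypotheses (a_gt0 : 0 < a) (D_gt0 : 0 < D) (dl_neq0 : dl != 0).
Hypothesis fE : forall lam, 0 <= lam -> f lam = dl ^+ 2 * quad D gm (lam * a + D)^-1 + L.

Let d2_gt0 : 0 < dl ^+ 2. Proof. by rewrite lt_def sqrf_eq0 dl_neq0 sqr_ge0. Qed.

Lemma profile_den_gt0 lam : 0 <= lam -> 0 < lam * a + D.
Proof. by move=> lam_ge0; exact: ltr_wpDl (mulr_ge0 lam_ge0 (ltW a_gt0)) D_gt0. Qed.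

Lemma profile_cvgy : f x @[x --> +oo] --> L.
Proof.
have den_cvg : (x * a + D) @[x --> +oo] --> +oo.
  apply/cvgryPge => A; near=> x.
  rewrite -lerBlDr -ler_pdivrMr //; near: x; exact: nbhs_pinfty_ge.
have inv_cvg : (x * a + D)^-1 @[x --> +oo] --> 0.
  apply/gtr0_cvgV0 => //; near=> x; apply: profile_den_gt0.
  near: x; exact: nbhs_pinfty_ge.
have -> : L = dl ^+ 2 * quad D gm 0 + L by rewrite /quad expr0n /= !mulr0 subr0 mulr0 add0r.
apply: (cvg_trans (near_eq_cvg _)).
  near=> x; rewrite fE //; near: x; exact: nbhs_pinfty_ge.
apply: cvgD; last exact: cvg_cst.
apply: cvgM; first exact: cvg_cst.
rewrite /quad expr2; apply: cvgB; apply: cvgM; try exact: cvg_cst.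
  exact: (cvgM inv_cvg inv_cvg).
exact: inv_cvg.
Unshelve. all: by end_near.
Qed.

Lemma profile_decreasing : gm <= 0 -> forall x y, 0 <= x -> x < y -> f y < f x.
Proof.
move=> gm_le0 x y x_ge0 xy; have y_ge0 := le_trans x_ge0 (ltW xy).
rewrite !fE // ltrD2r ltr_pM2l //; apply: quad_ltr_right => //.
  apply: (@le_trans _ _ 0); first by rewrite ler_pdivrMr // mul0r.
  by rewrite ltW // invr_gt0 profile_den_gt0.
by rewrite ltf_pV2 ?posrE ?profile_den_gt0 // ltrD2r ltr_pM2r.
Qed.

Lemma profile_ge : gm <= 0 -> forall lam, 0 <= lam -> L <= f lam.
Proof.
move=> gm_le0 lam lam_ge0; rewrite fE // lerDr pmulr_rge0 //.
have -> : 0 = quad D gm 0 by rewrite /quad expr0n /= !mulr0 subr0.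
apply/ltW/quad_ltr_right => //; last by rewrite invr_gt0 profile_den_gt0.
by rewrite ler_pdivrMr // mul0r.
Qed.

Lemma profile_gamma_le0 : gm <= 0 ->
  (forall x y, 0 <= x -> x < y -> f y < f x) /\ f x @[x --> +oo] --> L /\
  inf [set f lam | lam in [set x | 0 <= x]] = L.
Proof.
move=> gm_le0; split; [exact: profile_decreasing | split; first exact: profile_cvgy].
by apply: inf_image_cvgy; [exact: profile_ge | exact: profile_cvgy].
Qed.

Lemma profile_min_vertex : 0 < gm < 1 ->
  0 < (D / gm - D) / a /\ forall lam, 0 <= lam -> f ((D / gm - D) / a) <= f lam.
Proof.
move=> /andP[gm_gt0 gm_lt1].
have lstar_gt0 : 0 < (D / gm - D) / a.
  by rewrite divr_gt0 // subr_gt0 ltr_pdivlMr // gtr_pMr.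
split=> // lam lam_ge0; rewrite (fE (ltW lstar_gt0)) fE // lerD2r ler_pM2l //.
have -> : (D / gm - D) / a * a + D = D / gm.
  by field; rewrite !gt_eqF.
by rewrite invf_div; exact: quad_vertex_min.
Qed.

Lemma profile_min_at0 : 1 <= gm -> forall lam, 0 <= lam -> f 0 <= f lam.
Proof.
move=> gm_ge1 lam lam_ge0; rewrite !fE // lerD2r ler_pM2l // mul0r add0r.
apply: quad_ler_left => //.
  rewrite lef_pV2 ?posrE ?profile_den_gt0 // lerDr; exact: mulr_ge0 lam_ge0 (ltW a_gt0).
by rewrite ler_pdivlMr // mulVf ?gt_eqF.
Qed.

End RegularizationProfile.

Theorem theorem1 (R : realType) (N : nat) (h0 h1 : 'cV[R]_N)
  (tau sig0 sig1 sign c1 : R) :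
  (2 <= N)%N ->
  Num.sqrt (dot h0 h0) = 1 -> Num.sqrt (dot h1 h1) = 1 ->
  - (pi / 2) < tau < pi / 2 -> dot h0 h1 = sin tau ->
  0 < sig0 -> 0 < sig1 -> 0 < sign ->
  - (sig0 * sig1) <= c1 <= sig0 * sig1 ->
  let mse := MSE h0 h1 sig0 sig1 c1 sign in
  let delta := sign ^+ 2 * tan tau - c1 * cos tau in
  let g := fun lam : R => lam * cos tau ^+ 2 + sig1 ^+ 2 * cos tau ^+ 2 + sign ^+ 2 in
  let gamma := sign ^+ 2 * tan tau / delta in
  (forall lam : R, 0 <= lam ->
     0 < g lam /\
     mse lam = delta ^+ 2 * (sig1 ^+ 2 * cos tau ^+ 2 + sign ^+ 2) / g lam ^+ 2
               - 2 * sign ^+ 2 * delta * tan tau / g lam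
               + sign ^+ 2 * (tan tau ^+ 2 + 1))
  /\ (delta = 0 -> forall lam : R, 0 <= lam -> mse lam = sign ^+ 2 * (tan tau ^+ 2 + 1))
  /\ (delta != 0 -> gamma <= 0 ->
        (forall x y : R, 0 <= x -> x < y -> mse y < mse x)
        /\ (mse x @[x --> +oo] --> (Jmse h0 h1 sig0 sig1 c1 sign (wZF h0 h1 sig0 sig1 c1 sign) : R))
        /\ inf [set mse lam | lam in [set x : R | 0 <= x]]
             = Jmse h0 h1 sig0 sig1 c1 sign (wZF h0 h1 sig0 sig1 c1 sign))
  /\ (delta != 0 -> 0 < gamma < 1 ->
        let lstar := - (c1 * (sig1 ^+ 2 * cos tau ^+ 2 + sign ^+ 2)) / (sign ^+ 2 * sin tau) in
        0 < lstar /\ forall lam : R, 0 <= lam -> mse lstar <= mse lam)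
  /\ (delta != 0 -> 1 <= gamma ->
        forall lam : R, 0 <= lam -> mse 0 <= mse lam).
Proof.
move=> _ nh0 nh1 tau_range h01 s0_gt0 s1_gt0 sn_gt0 c1_bound mse delta g gamma.
have h00 : dot h0 h0 = 1 by rewrite -(sqr_sqrtr (dotrr_ge0 h0)) nh0 expr1n.
have h11 : dot h1 h1 = 1 by rewrite -(sqr_sqrtr (dotrr_ge0 h1)) nh1 expr1n.
have c_gt0 := cos_gt0_pihalf tau_range.
have sc1 : sin tau ^+ 2 + cos tau ^+ 2 = 1 by rewrite addrC cos2Dsin2.
have c2_gt0 : 0 < cos tau ^+ 2 by rewrite exprn_gt0.
have D_gt0 : 0 < sig1 ^+ 2 * cos tau ^+ 2 + sign ^+ 2.
  by rewrite addr_gt0 ?mulr_gt0 ?exprn_gt0.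
have mseE := MSE_RZF s0_gt0 s1_gt0 sn_gt0 c1_bound h00 h11 h01 c_gt0 sc1.
have mse_quad (delta_neq0 : delta != 0) lam (lam_ge0 : 0 <= lam) :=
  MSE_RZF_quad s0_gt0 s1_gt0 sn_gt0 c1_bound h00 h11 h01 c_gt0 sc1 lam_ge0 delta_neq0.
have -> : Jmse h0 h1 sig0 sig1 c1 sign (wZF h0 h1 sig0 sig1 c1 sign)
          = sign ^+ 2 * (tan tau ^+ 2 + 1).
  rewrite (Jmse_ZF s0_gt0 s1_gt0 sn_gt0 c1_bound h00 h11 h01 c_gt0 sc1) /tan.
  by rewrite -[in LHS](mulr1 (sign ^+ 2)) -[in LHS]sc1; field; rewrite gt_eqF.
split; first by move=> lam lam_ge0; split; [exact: rzf_den_gt0 | exact: mseE].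
split; first by move=> delta0 lam lam_ge0; rewrite /mse mseE // -/(tan tau) -/delta delta0; ring.
split.
  by move=> delta_neq0; exact: profile_gamma_le0 c2_gt0 D_gt0 delta_neq0 (mse_quad delta_neq0).
split.
- move=> delta_neq0 gamma_range lstar.
  have sin_neq0 : sin tau != 0.
    apply: contraTneq gamma_range => sin0.
    by rewrite /gamma /tan sin0 !(mul0r, mulr0) ltxx.
  rewrite /lstar -(rzf_vertexE sig1 sn_gt0 c_gt0 sin_neq0 delta_neq0).
  exact (profile_min_vertex c2_gt0 D_gt0 delta_neq0 (mse_quad delta_neq0) gamma_range).
- move=> delta_neq0; exact: profile_min_at0 c2_gt0 D_gt0 delta_neq0 (mse_quad delta_neq0).
Qed.
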